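(* Let $a_2,a_3$ be integers with $1<a_2<a_3$, $A=\{1,a_2,a_3\}$, and let $SG(A,n,p)$ be a stride generator. Then the smallest break $y$ of $SG(A,n,p)$ satisfies $y=\mathrm{str}(T_p)-1$ or $y=\mathrm{end}(T_p)$ for some thread $T_p$ of order $p$.
   Context: For integers $n$ and $i\ge 0$, an integer $x$ has an $n$-generation of order $i$ if there are integers $c_1,c_2\ge 0$ with $x+ia_3=c_2a_2+c_1$ and $c_1+c_2\le n+i$. For integers $n$ and $p\ge0$, $SG(A,n,p)$ is a stride generator if: (A) every integer $0\le x<a_3$ has an $n$-generation of some order $\le p$; (B) at least one integer $0\le x<a_3$ has no $n$-generation of order $<p$; (C) at least one integer $0\le y<a_3$ has no $(n-1)$-generation of any order $\le p+1$. Any such $y$ is called a break. Threads: for integers $e\ge 0$, $i\ge0$ with $n+i-e\ge 0$, the thread $T(e,i)$ is the integer interval $[c,d]$ with $\mathrm{str}=c=ea_2-ia_3$ and $\mathrm{end}=d=c+(n+i)-e$; its order is $i$. Only such intervals meeting $[0,a_3)$ are regarded as threads. *)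

From Stdlib Require Import ZArith Lia.
Open Scope Z_scope.

Definition has_gen (a2 a3 n i x : Z) : Prop :=
  exists c1 c2 : Z, 0 <= c1 /\ 0 <= c2 /\
    x + i * a3 = c2 * a2 + c1 /\ c1 + c2 <= n + i.

Definition stride_generator (a2 a3 n p : Z) : Prop :=
  0 <= p /\
  (forall x, 0 <= x < a3 -> exists i, 0 <= i <= p /\ has_gen a2 a3 n i x) /\
  (* (B) *)
  (exists x, 0 <= x < a3 /\ forall i, 0 <= i < p -> ~ has_gen a2 a3 n i x) /\
  (exists y, 0 <= y < a3 /\ forall i, 0 <= i <= p + 1 -> ~ has_gen a2 a3 (n - 1) i y).

Definition is_break (a2 a3 n p y : Z) : Prop :=
  0 <= y < a3 /\ forall i, 0 <= i <= p + 1 -> ~ has_gen a2 a3 (n - 1) i y.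

Definition smallest_break (a2 a3 n p y : Z) : Prop :=
  is_break a2 a3 n p y /\ forall y', is_break a2 a3 n p y' -> y <= y'.

(* Thread T(e,i) = [str, end] with str = e*a2 - i*a3, end = str + (n+i) - e. *)
Definition thread_str (a2 a3 e i : Z) : Z := e * a2 - i * a3.
Definition thread_end (a2 a3 n e i : Z) : Z := thread_str a2 a3 e i + (n + i) - e.

Definition is_thread (a2 a3 n e i : Z) : Prop :=
  0 <= e /\ 0 <= i /\ 0 <= n + i - e /\
  thread_str a2 a3 e i < a3 /\ 0 <= thread_end a2 a3 n e i.

From Stdlib Require Import ZArith Lia.
Open Scope Z_scope.

(** Writing [c = a3 - a2], an integer [x >= 0] has an n-generation of order
    [i] iff the greedy number of parts [v / a2 + v mod a2] needed to write
    [v = x + i c] with parts [1] and [a2] is at most [n].  In this language the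
    smallest break [y] is a point where every shifted value [y + i c]
    ([i <= p + 1]) needs at least [n] parts, while [y] itself is covered at
    some order [j].  If [j = p], [y] is the end of the thread through
    [y + p c].  Otherwise the residue of [y + j c] exceeds that of the point
    [x0 + p c] of the uncovered witness [x0] of (B) by more than [y - c], which
    forces [y + 1 < a3]; the order [j'] covering [y + 1] then has
    [y + 1 + j' c] divisible by [a2].  If [j' = p], [y + 1] starts a thread;
    if [j' < p], comparing [x0 + p c] with [y + (j + j' + 1) c] contradicts
    either the break property or [x0 < a3]. *)

Definition coin_count (a2 v : Z) : Z := v / a2 + v mod a2.

Section CoinCount.

Variable a2 : Z.
Hypothesis a2_gt0 : 0 < a2.

Lemma coin_count_eq q r : 0 <= r < a2 -> coin_count a2 (a2 * q + r) = q + r.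
Proof.
  intros Hr. unfold coin_count.
  rewrite <- (Z.div_unique (a2 * q + r) a2 q r) by lia.
  rewrite <- (Z.mod_unique (a2 * q + r) a2 q r) by lia.
  reflexivity.
Qed.

Lemma coin_count_add_within v t :
  0 <= v mod a2 + t < a2 -> coin_count a2 (v + t) = coin_count a2 v + t.
Proof.
  intros Ht.
  rewrite (Z.div_mod v a2) at 1 by lia.
  rewrite <- Z.add_assoc, coin_count_eq by lia.
  unfold coin_count. lia.
Qed.

Lemma coin_count_add_mul v k : coin_count a2 (v + a2 * k) = coin_count a2 v + k.
Proof.
  pose proof (Z.mod_pos_bound v a2 a2_gt0).
  replace (v + a2 * k) with (a2 * (v / a2 + k) + v mod a2)
    by (pose proof (Z.div_mod v a2 ltac:(lia)); lia).
  rewrite coin_count_eq by lia.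
  unfold coin_count. lia.
Qed.

Lemma coin_count_le_self w : 0 <= w -> coin_count a2 w <= w.
Proof.
  intros Hw. unfold coin_count.
  pose proof (Z.div_mod w a2 ltac:(lia)).
  pose proof (Z.div_pos w a2 Hw a2_gt0).
  nia.
Qed.

Lemma coin_count_add_le v t :
  0 <= v mod a2 + t -> coin_count a2 (v + t) <= coin_count a2 v + t.
Proof.
  intros Ht.
  replace (v + t) with ((v mod a2 + t) + a2 * (v / a2))
    by (pose proof (Z.div_mod v a2 ltac:(lia)); lia).
  rewrite coin_count_add_mul.
  pose proof (coin_count_le_self _ Ht).
  unfold coin_count at 2. lia.
Qed.

Lemma coin_count_spec v k : 0 <= v ->
  (exists c1 c2, 0 <= c1 /\ 0 <= c2 /\ v = c2 * a2 + c1 /\ c1 + c2 <= k)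
  <-> coin_count a2 v <= k.
Proof.
  intros Hv. split.
  - intros (c1 & c2 & Hc1 & Hc2 & -> & Hk).
    rewrite Z.add_comm, Z.mul_comm, coin_count_add_mul.
    pose proof (coin_count_le_self c1 Hc1). lia.
  - intros Hk. exists (v mod a2), (v / a2).
    pose proof (Z.mod_pos_bound v a2 a2_gt0).
    pose proof (Z.div_pos v a2 Hv a2_gt0).
    pose proof (Z.div_mod v a2 ltac:(lia)).
    unfold coin_count in Hk. repeat split; lia.
Qed.

Lemma coin_count_succ_le v :
  coin_count a2 (v + 1) <= coin_count a2 v -> (v + 1) mod a2 = 0.
Proof.
  intros Hle.
  pose proof (Z.mod_pos_bound v a2 a2_gt0).
  destruct (Z.eq_dec (v mod a2) (a2 - 1)) as [Hlast | Hlast].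
  - symmetry. apply (Z.mod_unique _ _ (v / a2 + 1)); [lia |].
    pose proof (Z.div_mod v a2 ltac:(lia)). lia.
  - rewrite coin_count_add_within in Hle by lia. lia.
Qed.

Lemma coin_count_lt_mod_le u v :
  v mod a2 <= u mod a2 -> coin_count a2 u < coin_count a2 v -> u + a2 <= v.
Proof.
  unfold coin_count. intros Hmod Hlt.
  pose proof (Z.div_mod u a2 ltac:(lia)).
  pose proof (Z.div_mod v a2 ltac:(lia)).
  assert (Hq : 1 <= v / a2 - u / a2) by lia.
  nia.
Qed.

End CoinCount.

Lemma has_gen_iff a2 a3 n i x : 1 < a2 < a3 -> 0 <= x -> 0 <= i ->
  has_gen a2 a3 n i x <-> coin_count a2 (x + i * (a3 - a2)) <= n.
Proof.
  intros Ha Hx Hi. unfold has_gen.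
  rewrite (coin_count_spec a2 ltac:(lia) (x + i * a3) (n + i)) by nia.
  replace (x + i * a3) with ((x + i * (a3 - a2)) + a2 * i) by ring.
  rewrite coin_count_add_mul by lia. lia.
Qed.

Lemma is_break_iff a2 a3 n p y : 1 < a2 < a3 -> 0 <= y < a3 ->
  is_break a2 a3 n p y <->
  forall i, 0 <= i <= p + 1 -> n <= coin_count a2 (y + i * (a3 - a2)).
Proof.
  intros Ha Hy. unfold is_break. split.
  - intros [_ Hno] i Hi.
    destruct (Z_lt_le_dec (coin_count a2 (y + i * (a3 - a2))) n) as [Hlt |]; [| lia].
    exfalso. apply (Hno i Hi), has_gen_iff; lia.
  - intros Hge. split; [exact Hy |].
    intros i Hi Hg. apply has_gen_iff in Hg; [| lia ..].
    specialize (Hge i Hi). lia.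
Qed.

Lemma thread_end_of_coin_count a2 a3 n p y :
  1 < a2 < a3 -> 0 <= p -> 0 <= y < a3 ->
  coin_count a2 (y + p * (a3 - a2)) = n ->
  exists e, is_thread a2 a3 n e p /\ y = thread_end a2 a3 n e p.
Proof.
  intros Ha Hp Hy Hn.
  set (v := y + p * (a3 - a2)) in Hn.
  assert (Hv : 0 <= v) by (unfold v; nia).
  pose proof (Z.div_mod v a2 ltac:(lia)).
  pose proof (Z.mod_pos_bound v a2 ltac:(lia)).
  pose proof (Z.div_pos v a2 Hv ltac:(lia)).
  unfold coin_count in Hn.
  exists (v / a2 + p).
  unfold is_thread, thread_end, thread_str, v in *.
  repeat split; nia.
Qed.

Lemma thread_str_of_coin_count a2 a3 n p y :
  1 < a2 < a3 -> 0 <= p -> 0 <= y -> y + 1 < a3 ->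
  (y + 1 + p * (a3 - a2)) mod a2 = 0 ->
  coin_count a2 (y + 1 + p * (a3 - a2)) <= n ->
  exists e, is_thread a2 a3 n e p /\ y = thread_str a2 a3 e p - 1.
Proof.
  intros Ha Hp Hy Hy1 Hmod Hn.
  set (v := y + 1 + p * (a3 - a2)) in Hmod, Hn.
  assert (Hv : 0 <= v) by (unfold v; nia).
  pose proof (Z.div_mod v a2 ltac:(lia)).
  pose proof (Z.div_pos v a2 Hv ltac:(lia)).
  unfold coin_count in Hn.
  exists (v / a2 + p).
  unfold is_thread, thread_end, thread_str, v in *.
  repeat split; nia.
Qed.

Section SmallestBreak.

Variables a2 a3 n p y : Z.
Hypothesis a2_a3 : 1 < a2 < a3.
Hypothesis p_ge0 : 0 <= p.
Hypothesis covered : forall x, 0 <= x < a3 ->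
  exists i, 0 <= i <= p /\ coin_count a2 (x + i * (a3 - a2)) <= n.
Hypothesis y_range : 0 <= y < a3.
Hypothesis y_break : forall i, 0 <= i <= p + 1 ->
  n <= coin_count a2 (y + i * (a3 - a2)).
Hypothesis y_min : forall y', 0 <= y' < a3 ->
  (forall i, 0 <= i <= p + 1 -> n <= coin_count a2 (y' + i * (a3 - a2))) ->
  y <= y'.

Local Notation c := (a3 - a2).

Lemma stride_le_break : c <= y.
Proof.
  destruct (Z_lt_le_dec y c) as [Hlt |]; [| assumption].
  destruct (covered (y + a2) ltac:(lia)) as (i & Hi & Hcov).
  replace (y + a2 + i * c) with ((y + i * c) + a2 * 1) in Hcov by ring.
  rewrite coin_count_add_mul in Hcov by lia.
  specialize (y_break i ltac:(lia)). lia.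
Qed.

Lemma break_sub_stride_lt : y - c < n.
Proof.
  pose proof stride_le_break.
  destruct (Z_lt_le_dec (y - c) n) as [| Hge]; [assumption |].
  enough (y <= y - c) by lia.
  apply y_min; [lia |].
  intros i Hi. destruct (Z.eq_dec i 0) as [-> | Hi0].
  - replace (y - c + 0 * c) with (a2 * 0 + (y - c)) by ring.
    rewrite coin_count_eq by lia. lia.
  - replace (y - c + i * c) with (y + (i - 1) * c) by ring.
    apply y_break. lia.
Qed.

Lemma break_covered_exactly : exists j, 0 <= j <= p /\ coin_count a2 (y + j * c) = n.
Proof.
  destruct (covered y y_range) as (j & Hj & Hcov).
  exists j. specialize (y_break j ltac:(lia)). split; lia.
Qed.

Section UncoveredWitness.

Variable x0 : Z.
Hypothesis x0_range : 0 <= x0 < a3.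
Hypothesis x0_uncovered : forall i, 0 <= i < p -> n < coin_count a2 (x0 + i * c).

Lemma uncovered_covered_last : coin_count a2 (x0 + p * c) <= n.
Proof.
  destruct (covered x0 x0_range) as (i & Hi & Hcov).
  destruct (Z.eq_dec i p) as [-> | Hip]; [assumption |].
  specialize (x0_uncovered i ltac:(lia)). lia.
Qed.

Lemma residue_gap j : 0 <= j < p -> coin_count a2 (y + j * c) = n ->
  (x0 + p * c) mod a2 + (y - c) < (y + j * c) mod a2.
Proof.
  intros Hj Hn.
  pose proof uncovered_covered_last.
  pose proof break_sub_stride_lt.
  set (z := x0 + p * c) in *. set (Y := y + j * c) in Hn |- *.
  pose proof (Z.div_mod Y a2 ltac:(lia)).
  pose proof (Z.mod_pos_bound z a2 ltac:(lia)).
  destruct (Z_lt_le_dec (z mod a2 + (y - c)) (Y mod a2)) as [| Hle]; [assumption |].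
  exfalso.
  pose proof (x0_uncovered (p - j - 1) ltac:(lia)) as Hunc.
  replace (x0 + (p - j - 1) * c) with (z + (y - c - Y mod a2) + a2 * (- (Y / a2)))
    in Hunc by (unfold z, Y in *; lia).
  rewrite coin_count_add_mul in Hunc by lia.
  pose proof (coin_count_add_le a2 ltac:(lia) z (y - c - Y mod a2) ltac:(lia)).
  unfold coin_count at 1 in Hn. lia.
Qed.

Lemma no_early_wrap j j' : 0 <= j < p -> 0 <= j' < p ->
  coin_count a2 (y + j * c) = n -> (y + 1 + j' * c) mod a2 = 0 -> False.
Proof.
  intros Hj Hj' Hn Hwrap.
  pose proof stride_le_break.
  pose proof uncovered_covered_last.
  pose proof (residue_gap j Hj Hn) as Hgap.
  set (z := x0 + p * c) in *.
  set (Y := y + j * c) in Hn, Hgap.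
  set (V := y + 1 + j' * c) in Hwrap.
  pose proof (Z.div_mod Y a2 ltac:(lia)).
  pose proof (Z.mod_pos_bound Y a2 ltac:(lia)).
  pose proof (Z.mod_pos_bound z a2 ltac:(lia)).
  pose proof (Z.div_mod V a2 ltac:(lia)) as HV. rewrite Hwrap in HV.
  (* [W = V + Y - (y - c) - 1] with [a2 | V]; [Hgap] keeps the residue in range. *)
  set (W := y + (j + j' + 1) * c).
  assert (HWmod : W = a2 * (V / a2 + Y / a2) + (Y mod a2 - (y - c) - 1))
    by (unfold W, V, Y in *; lia).
  assert (HWcount : coin_count a2 W = V / a2 + n - (y - c) - 1).
  { rewrite HWmod, coin_count_eq by lia. unfold coin_count in Hn. lia. }
  assert (Hz : coin_count a2 W < coin_count a2 z).
  { pose proof (x0_uncovered (p - j' - 1) ltac:(lia)) as Hunc.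
    replace (x0 + (p - j' - 1) * c) with (z + (y - c + 1) + a2 * (- (V / a2)))
      in Hunc by (unfold z, V in *; lia).
    rewrite coin_count_add_mul, coin_count_add_within in Hunc by lia.
    lia. }
  destruct (Z_le_gt_dec (j + j' + 1) (p + 1)) as [Hle | Hgt].
  - pose proof (y_break (j + j' + 1) ltac:(lia)). unfold W, z in *. lia.
  - assert (HWz : W + a2 <= z).
    { apply (coin_count_lt_mod_le a2); [lia | | assumption].
      rewrite <- (Z.mod_unique W a2 (V / a2 + Y / a2) (Y mod a2 - (y - c) - 1));
        lia. }
    assert ((p + 2) * c <= (j + j' + 1) * c) by nia.
    unfold W, z in *. lia.
Qed.

End UncoveredWitness.

Hypothesis uncovered_exists : exists x0, 0 <= x0 < a3 /\
  forall i, 0 <= i < p -> n < coin_count a2 (x0 + i * (a3 - a2)).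

Lemma smallest_break_at_thread_boundary : exists e, is_thread a2 a3 n e p /\
  (y = thread_str a2 a3 e p - 1 \/ y = thread_end a2 a3 n e p).
Proof.
  destruct break_covered_exactly as (j & Hj & Hn).
  destruct (Z.eq_dec j p) as [-> | Hjp].
  { destruct (thread_end_of_coin_count a2 a3 n p y) as (e & He & Hend); try lia.
    exists e. auto. }
  destruct uncovered_exists as (x0 & Hx0 & Hunc).
  pose proof (residue_gap x0 Hx0 Hunc j ltac:(lia) Hn) as Hgap.
  pose proof (Z.mod_pos_bound (x0 + p * c) a2 ltac:(lia)).
  pose proof (Z.mod_pos_bound (y + j * c) a2 ltac:(lia)).
  destruct (covered (y + 1) ltac:(lia)) as (j' & Hj' & Hcov).
  assert (Hwrap : (y + 1 + j' * c) mod a2 = 0).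
  { replace (y + 1 + j' * c) with (y + j' * c + 1) in * by ring.
    apply (coin_count_succ_le a2); [lia |].
    specialize (y_break j' ltac:(lia)). lia. }
  destruct (Z.eq_dec j' p) as [-> | Hj'p].
  - destruct (thread_str_of_coin_count a2 a3 n p y) as (e & He & Hstr); try lia.
    exists e. auto.
  - exfalso. exact (no_early_wrap x0 Hx0 Hunc j j' ltac:(lia) ltac:(lia) Hn Hwrap).
Qed.

End SmallestBreak.

Theorem lemma9 (a2 a3 n p y : Z) :
  1 < a2 < a3 ->
  stride_generator a2 a3 n p ->
  smallest_break a2 a3 n p y ->
  exists e : Z, is_thread a2 a3 n e p /\
    (y = thread_str a2 a3 e p - 1 \/ y = thread_end a2 a3 n e p).
Proof.
  intros Ha (Hp & HA & HB & _) (Hbrk & Hmin).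
  pose proof (proj1 Hbrk) as Hy.
  apply smallest_break_at_thread_boundary; try assumption.
  - intros x Hx. destruct (HA x Hx) as (i & Hi & Hg).
    exists i. split; [assumption |]. apply has_gen_iff in Hg; lia.
  - apply is_break_iff; assumption.
  - intros y' Hy' Hge. apply Hmin, is_break_iff; assumption.
  - destruct HB as (x0 & Hx0 & Hno). exists x0. split; [assumption |].
    intros i Hi. specialize (Hno i Hi).
    destruct (Z_lt_le_dec n (coin_count a2 (x0 + i * (a3 - a2)))) as [| Hle];
      [assumption |].
    exfalso. apply Hno, has_gen_iff; lia.
Qed.
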